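(* Let $E$ be an almost finitely generated $R$-module and $f:R\to S$ a ring morphism satisfying going-down (generizing). Then ${}^af^{-1}(\mathrm{Supp}_R(E))=\mathrm{Supp}_S(E\otimes_RS)$.
   Context: Rings are commutative and unital. An $A$-module $E$ is almost finitely generated over $A$ if there is a ring morphism $A\to B$ such that $E$ is a finitely generated $B$-module whose induced $A$-module structure is the original one. ${}^af:\mathrm{Spec}(S)\to\mathrm{Spec}(R)$ is $Q\mapsto f^{-1}(Q)$; $\mathrm{Supp}_A(F)=\{P\in\mathrm{Spec}(A)\mid F_P\neq0\}$. *)

From HB Require Import structures.
From mathcomp Require Import all_boot all_order all_algebra.
Set Implicit Arguments. Unset Strict Implicit. Unset Printing Implicit Defensive.
Import GRing.Theory.
Local Open Scope ring_scope.

Definition is_ideal (R : comPzRingType) (P : R -> Prop) : Prop :=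
  P 0 /\ (forall x y, P x -> P y -> P (x + y)) /\ (forall r x, P x -> P (r * x)).

Definition is_prime (R : comPzRingType) (P : R -> Prop) : Prop :=
  is_ideal P /\ ~ P 1 /\ (forall x y, P (x * y) -> P x \/ P y).

(* ^a f : Spec S -> Spec R,  Q |-> f^{-1}(Q) *)
Definition comap (R S : comPzRingType) (f : R -> S) (Q : S -> Prop) : R -> Prop :=
  fun r => Q (f r).

Definition going_down (R S : comPzRingType) (f : {rmorphism R -> S}) : Prop :=
  forall (p p' : R -> Prop) (Q : S -> Prop),
    is_prime p -> is_prime p' -> (forall r, p' r -> p r) ->
    is_prime Q -> (forall r, comap f Q r <-> p r) ->
    exists Q' : S -> Prop, is_prime Q' /\ (forall s, Q' s -> Q s) /\
                           (forall r, comap f Q' r <-> p' r).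

(* E_P = 0 : every x/1 vanishes in the localization, i.e. s x = 0 for some s ∉ P. *)
Definition localization_zero (R : comPzRingType) (E : lmodType R) (P : R -> Prop) : Prop :=
  forall x : E, exists s : R, ~ P s /\ s *: x = 0.

Definition in_supp (R : comPzRingType) (E : lmodType R) (P : R -> Prop) : Prop :=
  is_prime P /\ ~ localization_zero E P.

Definition module_action (B : comPzRingType) (E : zmodType) (act : B -> E -> E) : Prop :=
  (forall b x y, act b (x + y) = act b x + act b y) /\
  (forall a b x, act (a + b) x = act a x + act b x) /\
  (forall a b x, act (a * b) x = act a (act b x)) /\
  (forall x, act 1 x = x).

Definition finitely_generated_action (B : comPzRingType) (E : zmodType)
    (act : B -> E -> E) : Prop :=
  exists (n : nat) (xs : 'I_n -> E),
    forall x : E, exists bs : 'I_n -> B, x = \sum_(i < n) act (bs i) (xs i).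

Definition almost_fg (R : comPzRingType) (E : lmodType R) : Prop :=
  exists (B : comPzRingType) (g : {rmorphism R -> B}) (act : B -> E -> E),
    module_action act /\ (forall r x, act (g r) x = r *: x) /\
    finitely_generated_action act.

(* (T, b) is the tensor product E ⊗_R S, with its S-module structure
   s·(x ⊗ s') = x ⊗ (s s'); b x s stands for x ⊗ s. *)
Definition is_tensor_base_change (R S : comPzRingType) (f : {rmorphism R -> S})
    (E : lmodType R) (T : lmodType S) (b : E -> S -> T) : Prop :=
  (forall x y s, b (x + y) s = b x s + b y s) /\
  (forall x s s', b x (s + s') = b x s + b x s') /\
  (forall r x s, b (r *: x) s = b x (f r * s)) /\
  (forall x s s', b x (s * s') = s *: b x s') /\
  (forall (M : zmodType) (phi : E -> S -> M),
     (forall x y s, phi (x + y) s = phi x s + phi y s) ->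
     (forall x s s', phi x (s + s') = phi x s + phi x s') ->
     (forall r x s, phi (r *: x) s = phi x (f r * s)) ->
     exists g : T -> M,
       (forall u v, g (u + v) = g u + g v) /\
       (forall x s, g (b x s) = phi x s) /\
       (forall g' : T -> M, (forall u v, g' (u + v) = g' u + g' v) ->
          (forall x s, g' (b x s) = phi x s) -> forall u, g' u = g u)).

(* If E_p = 0 for p = f⁻¹(Q), every pure tensor x ⊗ s is killed by some f(r) with r ∉ p;
   since pure tensors generate E ⊗ S, (E ⊗ S)_Q = 0.

   Conversely, let E be a finitely generated B-module through g : R → B and x0 nonzero in
   E_p.  The annihilator of x0 in B misses g(R ∖ p), so it lies in a prime P of B avoiding
   g(R ∖ p); then E_P ≠ 0 and Nakayama gives y with y/1 ∉ P E_P.  For p' = g⁻¹(P) ⊆ p the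
   image of y in E ⊗ κ(p') is nonzero, and going-down gives a prime Q' ⊆ Q of S over p'.
   A maximal submodule of E that is saturated, contains p'E and misses y (Zorn) has a
   one-dimensional quotient over κ(p'), whence a κ(p')-linear mu : E → κ(Q') with
   mu(y) = 1.  The balanced map (x, s) ↦ mu(x) h(s), for h : S → κ(Q'), sends y ⊗ s to
   h(s) ≠ 0 when s ∉ Q, so y ⊗ 1 survives in (E ⊗ S)_Q. *)

From HB Require Import structures.
From mathcomp Require Import all_boot all_order all_algebra ring.
From mathcomp Require Import boolp classical_sets.
Set Implicit Arguments. Unset Strict Implicit. Unset Printing Implicit Defensive.
Import GRing.Theory.
Local Open Scope ring_scope.
Local Open Scope classical_set_scope.
Local Open Scope quotient_scope.

Lemma Zorn_bigcup_nonempty (T : Type) (P : set (set T)) : P !=set0 ->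
  (forall F : set (set T), F `<=` P -> F !=set0 -> total_on F subset ->
    P (\bigcup_(X in F) X)) ->
  exists2 A, P A & forall B, P B -> A `<=` B -> B `<=` A.
Proof.
move=> [X0 PX0] chainP; pose R (A B : {X | P X}) := `[< sval A `<=` sval B >].
have [| | |[A PA] Amax] := @ZL_preorder _ (exist _ X0 PX0) R.
- by move=> ?; exact/asboolP.
- by move=> ? ? ? /asboolP AB /asboolP BC; apply/asboolP; exact: subset_trans BC.
- move=> F Ftot; pose G := [set sval A | A in F].
  have [[_ [A FA _]]|G0] := pselect (G !=set0); last first.
    by exists (exist _ X0 PX0) => A FA; case: G0; exists (sval A), A.
  have GP : G `<=` P by move=> _ [B _ <-]; exact: svalP.
  have Gtot : total_on G subset.
    move=> _ _ [B FB <-] [C FC <-].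
    by have [/asboolP|/asboolP] := Ftot _ _ FB FC; [left|right].
  exists (exist _ _ (chainP G GP (ex_intro _ _ (imageP _ FA)) Gtot)) => B FB.
  by apply/asboolP => t Bt; exists (sval B) => //; exact: imageP.
- by exists A => // B PB AB; apply/asboolP/(Amax (exist _ B PB)); exact/asboolP.
Qed.

Section Submodules.
Variables (R : comPzRingType) (V : lmodType R).
Implicit Types (X G M : set V) (I P : set R).

Definition submodule X :=
  X 0 /\ (forall x y, X x -> X y -> X (x + y)) /\ (forall r x, X x -> X (r *: x)).

Lemma submoduleB X x y : submodule X -> X x -> X y -> X (x - y).
Proof. by move=> [_ [XD XZ]] Xx Xy; rewrite -scaleN1r; apply: XD => //; exact: XZ. Qed.

Lemma submodule_sum X n (F : 'I_n -> V) :
  submodule X -> (forall i, X (F i)) -> X (\sum_i F i).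
Proof. by move=> [X0 [XD _]] XF; elim/big_ind: _. Qed.

Lemma submodule_bigcup (F : set (set V)) : F `<=` submodule -> F !=set0 ->
  total_on F subset -> submodule (\bigcup_(X in F) X).
Proof.
move=> Fsub [X FX] Ftot; split; first by exists X => //; case: (Fsub X FX).
split=> [x y [Y FY Yx] [Z FZ Zy]|r x [Y FY Yx]]; last first.
  by exists Y => //; case: (Fsub Y FY) => _ [_]; apply.
have [YZ|ZY] := Ftot _ _ FY FZ.
  by exists Z => //; case: (Fsub Z FZ) => _ [+ _]; apply => //; exact: YZ.
by exists Y => //; case: (Fsub Y FY) => _ [+ _]; apply => //; exact: ZY.
Qed.

Inductive span G : set V :=
| span_gen x : G x -> span G x
| span0 : span G 0
| spanD x y : span G x -> span G y -> span G (x + y)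
| spanZ r x : span G x -> span G (r *: x).

Lemma span_submodule G : submodule (span G).
Proof. by split; [exact: span0 | split; [exact: spanD | exact: spanZ]]. Qed.

Lemma span_min G X : submodule X -> G `<=` X -> span G `<=` X.
Proof.
move=> [X0 [XD XZ]] GX x.
by elim=> [y /GX //|//|y z _ Xy _ Xz|r y _ Xy]; [exact: XD | exact: XZ].
Qed.

Definition ideal_smul I M : set V :=
  span (fun z => exists p w, [/\ I p, M w & z = p *: w]).

(* The preimage in [V] of the localization [X_P]. *)
Definition saturation P X : set V := fun z => exists2 v, ~ P v & X (v *: z).

Section Saturation.
Variables (P : set R) (X : set V).
Hypothesis P_prime : is_prime P.

Lemma sub_saturation : X `<=` saturation P X.
Proof. by move=> x Xx; exists 1; [case: P_prime => _ [] | rewrite scale1r]. Qed.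

Lemma saturation_submodule : submodule X -> submodule (saturation P X).
Proof.
case: P_prime => _ [_ PM] [X0 [XD XZ]]; split; first exact: sub_saturation.
split=> [x y [u Pu Xux] [v Pv Xvy]|r x [u Pu Xux]]; last first.
  by exists u => //; rewrite scalerA mulrC -scalerA; exact: XZ.
exists (u * v); first by move=> /PM [].
by rewrite scalerDr {1}mulrC -!scalerA; apply: XD; exact: XZ.
Qed.

Lemma saturation_idem : saturation P (saturation P X) `<=` saturation P X.
Proof.
case: P_prime => _ [_ PM] x [u Pu [v Pv Xvux]].
by exists (v * u); [move=> /PM [] | rewrite -scalerA].
Qed.

End Saturation.
End Submodules.

Section Nakayama.
Variables (B : comPzRingType) (V : lmodType B) (P : set B) (n : nat) (xs : 'I_n -> V).
Hypotheses (P_prime : is_prime P)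
  (xs_gen : forall x, exists bs : 'I_n -> B, x = \sum_i bs i *: xs i).

Definition span_from k := span (fun z => exists2 i : 'I_n, (k <= i)%N & z = xs i).

Let span_from0 x : span_from 0 x.
Proof.
have [bs ->] := xs_gen x; apply: submodule_sum; first exact: span_submodule.
by move=> i; apply/spanZ/span_gen; exists i.
Qed.

Let span_from_n : span_from n `<=` [set 0].
Proof.
apply: span_min => [|x [i ni _]]; last by move: (ltn_ord i); rewrite ltnNge ni.
by split=> //; split=> [x y -> ->|r x ->]; rewrite ?addr0 ?scaler0.
Qed.

Hypothesis PV_dense : forall y : V, saturation P (ideal_smul P setT) y.

Section Step.
Variables (k : nat) (kn : (k < n)%N).
Hypothesis span_from_dense : forall y, saturation P (span_from k) y.
Let xk := xs (Ordinal kn).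

Let decomp (I : set B) : set V :=
  fun w => exists z q, [/\ span_from k.+1 z, I q & w = z + q *: xk].

Let decomp_submodule I : is_ideal I -> submodule (decomp I).
Proof.
move=> [I0 [ID IM]]; split; first by exists 0, 0; rewrite scale0r addr0; split=> //; exact: span0.
split=> [x y [z [q [Sz Iq ->]]] [z' [q' [Sz' Iq' ->]]]|r x [z [q [Sz Iq ->]]]].
  by exists (z + z'), (q + q'); split; [exact: spanD | exact: ID | rewrite scalerDl addrACA].
by exists (r *: z), (r * q); split; [exact: spanZ | exact: IM | rewrite scalerDr scalerA].
Qed.

Let span_from_decomp : span_from k `<=` decomp setT.
Proof.
apply: span_min; first by apply: decomp_submodule.
move=> _ [i ki ->]; have [ik|ik] := eqVneq (i : nat) k.
  by exists 0, 1; rewrite scale1r add0r; split=> //; [exact: span0 | congr xs; exact: val_inj].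
exists (xs i), 0; rewrite scale0r addr0; split=> //.
by apply: span_gen; exists i => //; rewrite ltn_neqAle eq_sym ik.
Qed.

Let ideal_smul_span_from_decomp : ideal_smul P (span_from k) `<=` decomp P.
Proof.
apply: span_min; first by apply: decomp_submodule; case: P_prime.
move=> _ [p [w [Pp /span_from_decomp [z [q [Sz _ ->]]] ->]]].
exists (p *: z), (p * q); split; first exact: spanZ.
  by rewrite mulrC; case: P_prime => [[_ [_ PM]] _]; exact: PM.
by rewrite scalerDr scalerA.
Qed.

Let ideal_smul_saturation :
  ideal_smul P setT `<=` saturation P (ideal_smul P (span_from k)).
Proof.
apply: span_min; first exact/saturation_submodule/span_submodule.
move=> _ [p [w [Pp _ ->]]]; have [v Pv Sw] := span_from_dense w.
by exists v => //; rewrite scalerA mulrC -scalerA; apply: span_gen; exists p, (v *: w).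
Qed.

Let xk_saturation : saturation P (span_from k.+1) xk.
Proof.
have [u Pu /ideal_smul_saturation [v Pv]] := PV_dense xk.
rewrite scalerA => /ideal_smul_span_from_decomp [z [q [Sz Pq vuxk]]].
exists (v * u - q); last by rewrite scalerBl vuxk addrK.
case: P_prime => [[_ [PD _]] [_ PM]] Pvuq.
by move: (PD _ _ Pvuq Pq); rewrite subrK => /PM [].
Qed.

Let span_from_saturation : span_from k `<=` saturation P (span_from k.+1).
Proof.
apply: span_min; first exact/saturation_submodule/span_submodule.
move=> _ [i ki ->]; have [ik|ik] := eqVneq (i : nat) k.
  by rewrite (_ : i = Ordinal kn); [exact: xk_saturation | exact: val_inj].
by apply/sub_saturation/span_gen => //; exists i => //; rewrite ltn_neqAle eq_sym ik.
Qed.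

Lemma saturation_span_fromS y : saturation P (span_from k.+1) y.
Proof.
have [v Pv /span_from_saturation Svy] := span_from_dense y.
by apply: (saturation_idem P_prime); exists v.
Qed.

End Step.

Lemma nakayama_localization_zero : localization_zero V P.
Proof.
have sat_all k : (k <= n)%N -> forall y, saturation P (span_from k) y.
  elim: k => [_ y|k IHk kn]; first exact/(sub_saturation P_prime)/span_from0.
  exact: (saturation_span_fromS kn (IHk (ltnW kn))).
by move=> y; have [v Pv /span_from_n vy0] := sat_all n (leqnn n) y; exists v.
Qed.

End Nakayama.

Lemma nakayama_residue_nonzero (B : comPzRingType) (V : lmodType B) (P : set B)
    n (xs : 'I_n -> V) :
  is_prime P -> (forall x, exists bs : 'I_n -> B, x = \sum_i bs i *: xs i) ->
  ~ localization_zero V P -> exists y : V, ~ saturation P (ideal_smul P setT) y.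
Proof.
move=> P_prime xs_gen; apply: contra_notP => PV_dense.
apply: (nakayama_localization_zero P_prime xs_gen) => y.
by apply: contrapT => PVy; apply: PV_dense; exists y.
Qed.

Lemma ideal_add_principal (R : comPzRingType) (A : set R) (x : R) :
  is_ideal A -> is_ideal (fun z => exists p d, A p /\ z = p + d * x).
Proof.
move=> [A0 [AD AM]]; split; first by exists 0, 0; rewrite mul0r addr0.
split=> [_ _ [p [d [Ap ->]]] [p' [d' [Ap' ->]]]|r _ [p [d [Ap ->]]]].
  by exists (p + p'), (d + d'); split; [exact: AD | ring].
by exists (r * p), (r * d); split; [exact: AM | ring].
Qed.

Lemma exists_prime_avoiding (R : comPzRingType) (I U : set R) :
  is_ideal I -> U 1 -> (forall u v, U u -> U v -> U (u * v)) ->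
  (forall u, U u -> ~ I u) ->
  exists P, [/\ is_prime P, I `<=` P & forall u, U u -> ~ P u].
Proof.
move=> I_ideal U1 UM UI.
pose good J := [/\ is_ideal J, I `<=` J & forall u, U u -> ~ J u].
have [A [A_ideal IA UA] Amax] : exists2 A, good A & forall J, good J -> A `<=` J -> J `<=` A.
  apply: Zorn_bigcup_nonempty => [|F Fgood [J FJ] Ftot]; first by exists I; split.
  split.
  - have := @submodule_bigcup _ R^o F; apply=> // [K /Fgood [] //|]; by exists J.
  - by move=> r Ir; exists J => //; case: (Fgood J FJ) => _ + _; apply.
  - by move=> u Uu [K FK Ku]; case: (Fgood K FK) => _ _ /(_ u Uu).
have meetU x : ~ A x -> exists2 u, U u & exists p d, A p /\ u = p + d * x.
  move=> Ax; apply: contrapT => noU; apply: Ax.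
  pose J z := exists p d, A p /\ z = p + d * x.
  have AJ : A `<=` J by move=> r Ar; exists r, 0; rewrite mul0r addr0.
  apply: (Amax J) => //; last by exists 0, 1; rewrite add0r mul1r; case: A_ideal.
  split; [exact: ideal_add_principal | exact: subset_trans IA AJ |].
  by move=> u Uu Ju; apply: noU; exists u.
exists A; split=> //; split=> //; split=> [|x y Axy]; first exact: UA.
case: A_ideal => _ [AD AM].
have [Ax|/meetU [u Uu [p [d [Ap Eu]]]]] := pselect (A x); first by left.
have [Ay|/meetU [v Uv [p' [d' [Ap' Ev]]]]] := pselect (A y); first by right.
case: (UA _ (UM _ _ Uu Uv)).
have -> : u * v = p * v + (d * x) * p' + (d * d') * (x * y) by rewrite Eu Ev; ring.
by apply: (AD); [apply: (AD); [rewrite mulrC |] |]; exact: AM.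
Qed.

Lemma comap_prime (R S : comPzRingType) (f : {rmorphism R -> S}) (Q : set S) :
  is_prime Q -> is_prime (comap f Q).
Proof.
move=> [[Q0 [QD QM]] [Q1 QP]]; rewrite /comap; split; first split.
- by rewrite rmorph0.
- by split=> [x y Qx Qy|r x Qx]; rewrite ?rmorphD ?rmorphM; [exact: QD | exact: QM].
- by split=> [|x y]; rewrite ?rmorph1 ?rmorphM //; exact: QP.
Qed.

Lemma rmorph_kernel_prime (R : comPzRingType) (D : idomainType) (h : {rmorphism R -> D}) :
  is_prime (fun r => h r = 0).
Proof.
split; first split; first exact: rmorph0.
  by split=> [x y hx hy|r x hx]; rewrite ?rmorphD ?rmorphM hx ?hy ?addr0 ?mulr0.
split; first by rewrite rmorph1; exact/eqP/oner_neq0.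
by move=> x y; rewrite rmorphM => /eqP; rewrite mulf_eq0 => /orP [] /eqP; [left|right].
Qed.

Lemma annihilator_ideal (B : comPzRingType) (V : lmodType B) (x : V) :
  is_ideal (fun c => c *: x = 0).
Proof.
split; first exact: scale0r.
by split=> [c d cx dx|r c cx]; rewrite ?scalerDl ?cx ?dx ?addr0 // -scalerA cx scaler0.
Qed.

Section ResidueField.
Variables (S : comPzRingType) (Q : set S).
Hypothesis Q_prime : is_prime Q.

Let Snz : Type := S.
HB.instance Definition _ := GRing.ComPzRing.on Snz.

Let oner_neq0 : (1 : Snz) != 0.
Proof. by apply/eqP => e; case: Q_prime => [[Q0 _] [/(_ _) Q1 _]]; apply: Q1; rewrite e. Qed.
HB.instance Definition _ := GRing.PzSemiRing_isNonZero.Build Snz oner_neq0.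

Let Qpred : {pred Snz} := fun s => `[< Q s >].

Let Qpred_ideal : idealr_closed Qpred.
Proof.
case: Q_prime => [[Q0 [QD QM]] _]; split; first exact/asboolP.
  by apply/asboolP; case: Q_prime => _ [].
by move=> a u v /asboolP Qu /asboolP Qv; apply/asboolP; apply: QD => //; exact: QM.
Qed.
HB.instance Definition _ := isIdealr.Build Snz Qpred Qpred_ideal.

Let Qpred_prime : prime_idealr_closed Qpred.
Proof.
case: Q_prime => _ [_ QP] u v /asboolP /QP [Qu|Qv]; apply/orP; [left|right]; exact/asboolP.
Qed.
HB.instance Definition _ := isPrimeIdealrClosed.Build Snz Qpred Qpred_prime.

Local Notation D := {ideal_quot Qpred}.

(* [D] is a domain; it gets a (classical) unit-ring structure only to form its fraction field. *)
Let Dunit : {pred D} := fun x => `[< exists y : D, y * x = 1 >].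
Let Dinv (x : D) : D :=
  if pselect (exists y : D, y * x = 1) is left ex then sval (cid ex) else x.

Let DmulVr : {in Dunit, left_inverse 1 Dinv *%R}.
Proof. by move=> x /asboolP ex; rewrite /Dinv; case: pselect => // ex'; case: cid. Qed.

Let DunitP (x y : D) : y * x = 1 -> Dunit x.
Proof. by move=> yx1; apply/asboolP; exists y. Qed.

Let Dinv_out : {in [predC Dunit], Dinv =1 id}.
Proof. by move=> x /asboolPn nex; rewrite /Dinv; case: pselect. Qed.

HB.instance Definition _ := GRing.ComNzRing_hasMulInverse.Build D DmulVr DunitP Dinv_out.
HB.instance Definition _ :=
  GRing.ComUnitRing_isIntegral.Build D (@Quotient.rquot_IdomainAxiom _ _).

Definition residue : {rmorphism Snz -> {fraction D}} := (@FracField.tofrac D) \o \pi_D.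

Lemma residue_eq0 s : residue s = 0 <-> Q s.
Proof.
rewrite /residue /= -tofrac0 -(rmorph0 (\pi_D)); split => [|Qs].
  by move/eqP; rewrite tofrac_eq piE Quotient.equivE subr0 => /asboolP.
by apply/eqP; rewrite tofrac_eq piE Quotient.equivE subr0; exact/asboolP.
Qed.

End ResidueField.

Lemma exists_residue_field (S : comPzRingType) (Q : set S) : is_prime Q ->
  exists (K : fieldType) (h : {rmorphism S -> K}), forall s, h s = 0 <-> Q s.
Proof. by move=> Q_prime; exists _, (residue Q_prime); exact: residue_eq0. Qed.

Lemma scaler_cross_add (R : comPzRingType) (V : lmodType R) (a a' c c' : R) (w w' z : V) :
  (a * a') *: (w + w') - (a' * c + a * c') *: z =
  a' *: (a *: w - c *: z) + a *: (a' *: w' - c' *: z).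
Proof. by rewrite !scalerBr !scalerA scalerDr scalerDl opprD [a' * a]mulrC addrACA. Qed.

Section SemilinearFunctional.
Variables (R : comPzRingType) (V : lmodType R) (K : fieldType) (h : {rmorphism R -> K}).
Variable y : V.
Local Notation kerh := (fun r => h r = 0).

(* [N] is admissible when [V / N] is a vector space over the residue field of [ker h]
   in which [y] does not vanish. *)
Definition admissible (N : set V) := [/\ submodule N,
  forall r z, h r = 0 -> N (r *: z),
  forall a z, h a != 0 -> N (a *: z) -> N z & ~ N y].

Lemma admissible_bigcup (F : set (set V)) : F `<=` admissible -> F !=set0 ->
  total_on F subset -> admissible (\bigcup_(X in F) X).
Proof.
move=> Fadm [X FX] Ftot; split.
- by apply: submodule_bigcup => // [N /Fadm []|]; last exists X.
- by move=> r z hr; exists X => //; case: (Fadm X FX) => _ + _ _; apply.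
- by move=> a z ha [N FN Naz]; exists N => //; case: (Fadm N FN) => _ _ /(_ a z ha Naz).
- by move=> [N FN Ny]; case: (Fadm N FN).
Qed.

Let h1_neq0 : h 1 != 0. Proof. by rewrite rmorph1 oner_neq0. Qed.

Section Admissible.
Variables (A : set V) (A_adm : admissible A).

Let line_sum z : set V := fun w => exists a c, h a != 0 /\ A (a *: w - c *: z).

Let line_sum_admissible z : ~ line_sum z y -> admissible (line_sum z).
Proof.
case: A_adm => -[A0 [AD AZ]] Aker Asat _ Ly; split=> //.
- split; first by exists 1, 0; rewrite scaler0 scale0r subr0.
  split=> [w w' [a [c [ha Aw]]] [a' [c' [ha' Aw']]]|r w [a [c [ha Aw]]]].
    exists (a * a'), (a' * c + a * c'); split; first by rewrite rmorphM mulf_neq0.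
    by rewrite scaler_cross_add; apply: AD; exact: AZ.
  exists a, (r * c); split=> //.
  by rewrite scalerA mulrC -scalerA -scalerA -scalerBr; exact: AZ.
- by move=> r w hr; exists 1, 0; rewrite scale1r scale0r subr0; split=> //; exact: Aker.
- move=> a0 w ha0 [a [c [ha Aw]]]; exists (a * a0), c.
  by rewrite rmorphM mulf_neq0 // -scalerA.
Qed.

Lemma admissible_maximal_line : (forall N, admissible N -> A `<=` N -> N `<=` A) ->
  forall z, exists a c, h a != 0 /\ A (a *: z - c *: y).
Proof.
case: A_adm => -[A0 [AD AZ]] Aker Asat Ay Amax z.
have [Az|Az] := pselect (A z); first by exists 1, 0; rewrite scale1r scale0r subr0.
have [[a [c [ha Aac]]]|Ly] := pselect (line_sum z y); last first.
  case: Az; apply: (Amax _ (line_sum_admissible Ly)); last first.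
    by exists 1, 1; rewrite subrr.
  by move=> w Aw; exists 1, 0; rewrite scale1r scale0r subr0.
have [hc|hc] := eqVneq (h c) 0.
  case: Ay; apply: (Asat a) => //.
  by rewrite -(subrK (c *: z) (a *: y)); apply: AD => //; exact: Aker.
exists c, a; split=> //; rewrite -opprB -scaleN1r; exact: AZ.
Qed.

Lemma admissible_line_ratio z a c a' c' : h a != 0 -> h a' != 0 ->
  A (a *: z - c *: y) -> A (a' *: z - c' *: y) -> h c / h a = h c' / h a'.
Proof.
have [A_sub _ Asat Ay] := A_adm; have [_ [_ AZ]] := A_sub.
move=> ha ha' Ac Ac'; apply/eqP; rewrite eqr_div // -subr_eq0 -2!rmorphM -rmorphB.
apply: contraT => hd; case: Ay; apply: (Asat _ _ hd).
have <- : a *: (a' *: z - c' *: y) - a' *: (a *: z - c *: y) = (c * a' - c' * a) *: y.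
  rewrite !scalerBr !scalerA opprB addrC [a' * a]mulrC addrA subrK scalerBl.
  by rewrite [c * a']mulrC [c' * a]mulrC.
by apply: (submoduleB A_sub); exact: AZ.
Qed.

End Admissible.

Let kerh_prime : is_prime kerh. Proof. exact: rmorph_kernel_prime. Qed.

Lemma saturation_ideal_smul_admissible :
  ~ saturation kerh (ideal_smul kerh setT) y ->
  admissible (saturation kerh (ideal_smul kerh setT)).
Proof.
move=> y_free; split.
- exact/(saturation_submodule kerh_prime)/span_submodule.
- by move=> r z hr; apply: (sub_saturation kerh_prime); apply: span_gen; exists r, z.
- move=> a z ha [v hv Svaz]; exists (v * a); last by rewrite -scalerA.
  by rewrite rmorphM => /eqP; rewrite mulf_eq0 (negPf ha) orbF => /eqP.
- exact: y_free.
Qed.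

Lemma exists_semilinear_functional :
  ~ saturation kerh (ideal_smul kerh setT) y ->
  exists mu : V -> K, [/\ forall z w, mu (z + w) = mu z + mu w,
    forall r z, mu (r *: z) = h r * mu z & mu y = 1].
Proof.
move=> /saturation_ideal_smul_admissible N_adm.
have [A A_adm Amax] := Zorn_bigcup_nonempty (ex_intro _ _ N_adm) admissible_bigcup.
have line := admissible_maximal_line A_adm Amax.
have /choice [ac acP] : forall z, exists ac : R * R, h ac.1 != 0 /\ A (ac.1 *: z - ac.2 *: y).
  by move=> z; have [a [c ?]] := line z; exists (a, c).
pose mu z := h (ac z).2 / h (ac z).1.
have mu_ratio z a c : h a != 0 -> A (a *: z - c *: y) -> mu z = h c / h a.
  by move=> ha Az; have [ha0 Az0] := acP z; exact: (admissible_line_ratio A_adm ha0 ha Az0 Az).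
case: A_adm => -[A0 [AD AZ]] _ _ _.
exists mu; split=> [z w|r z|].
- have [a [c [ha Az]]] := line z; have [a' [c' [ha' Aw]]] := line w.
  rewrite (mu_ratio z a c) // (mu_ratio w a' c') // (mu_ratio _ (a * a') (a' * c + a * c')).
  + by rewrite rmorphD !rmorphM; field; rewrite ha ha'.
  + by rewrite rmorphM mulf_neq0.
  + by rewrite scaler_cross_add; apply: AD; exact: AZ.
- have [a [c [ha Az]]] := line z.
  rewrite (mu_ratio z a c) // (mu_ratio _ a (r * c)) ?rmorphM ?mulrA //.
  by rewrite scalerA mulrC -scalerA -scalerA -scalerBr; exact: AZ.
- by rewrite (mu_ratio y 1 1) ?subrr // rmorph1 divr1.
Qed.

End SemilinearFunctional.

Section ActionModule.
Variables (B : comPzRingType) (E : zmodType) (act : B -> E -> E).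
Hypothesis act_module : module_action act.

Definition action_module of module_action act : Type := E.
HB.instance Definition _ := GRing.Zmodule.on (action_module act_module).

Let actA a b x : act a (act b x) = act (a * b) x.
Proof. by case: act_module => _ [_ [actM _]]; rewrite actM. Qed.
Let act1 : left_id 1 act. Proof. by case: act_module => _ [_ [_]]. Qed.
Let actDr : right_distributive act +%R. Proof. by case: act_module. Qed.
Let actDl x : {morph act^~ x : a b / a + b}. Proof. by move=> a b; case: act_module => _ []. Qed.

HB.instance Definition _ :=
  GRing.Zmodule_isLmodule.Build B (action_module act_module) actA act1 actDr actDl.

End ActionModule.

Lemma ideal_smul_comap (R B : comPzRingType) (g : {rmorphism R -> B}) (E : lmodType R)
    (act : B -> E -> E) (act_module : module_action act)
    (act_g : forall r x, act (g r) x = r *: x) (P : set B) (x : E) :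
  ideal_smul (comap g P) setT x -> @ideal_smul _ (action_module act_module) P setT x.
Proof.
apply: span_min => [|_ [r [w [Pgr _ ->]]]]; last first.
  by rewrite -act_g; apply: span_gen; exists (g r), w.
split; first exact: span0.
by split=> [y z|r z]; [exact: spanD | rewrite -act_g; exact: (spanZ (g r))].
Qed.

Lemma almost_fg_fiber_nonzero (R : comPzRingType) (E : lmodType R) (p : set R) :
  almost_fg E -> is_prime p -> ~ localization_zero E p ->
  exists p' (y : E),
    [/\ is_prime p', p' `<=` p & ~ saturation p' (ideal_smul p' setT) y].
Proof.
move=> [B [g [act [act_module [act_g [n [xs xs_gen]]]]]]] p_prime Ep.
pose V := action_module act_module.
have [x0 x0_free] := (existsNP _).2 Ep.
pose U u := exists2 r, ~ p r & u = g r.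
have U1 : U 1 by exists 1; [case: p_prime => _ [] | rewrite rmorph1].
have UM u v : U u -> U v -> U (u * v).
  move=> [r pr ->] [r' pr' ->]; exists (r * r'); last by rewrite rmorphM.
  by case: p_prime => _ [_ /(_ r r') pM] /pM [].
have Ux0 u : U u -> ~ (u *: (x0 : V) = 0).
  by move=> [r pr ->] rx0; apply: x0_free; exists r; rewrite -act_g.
have [P [P_prime annP UP]] := exists_prime_avoiding (annihilator_ideal (x0 : V)) U1 UM Ux0.
have Vx0 : ~ localization_zero V P by move=> /(_ x0) [s [Ps /annP]].
have [y y_free] := @nakayama_residue_nonzero _ V _ _ xs P_prime xs_gen Vx0.
exists (comap g P), y; split; first exact: comap_prime.
  by move=> r Pgr; apply: contrapT => pr; apply: (UP (g r)) => //; exists r.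
move=> [a Pga /(ideal_smul_comap act_module act_g)]; rewrite -act_g => PVy.
by apply: y_free; exists (g a).
Qed.

Section TensorSpan.
Variables (R S : comPzRingType) (f : {rmorphism R -> S}) (E : lmodType R) (T : lmodType S).
Variables (b : E -> S -> T) (N : set T).
Hypotheses (tensor : is_tensor_base_change f b) (N0 : N 0)
  (NB : forall x y, N x -> N y -> N (x - y)) (Nb : forall x s, N (b x s)).

Let Npred : {pred T} := fun t => `[< N t >].

Let Npred_closed : zmod_closed Npred.
Proof.
by split=> [|x y /asboolP Nx /asboolP Ny]; apply/asboolP; [exact: N0 | exact: NB].
Qed.
HB.instance Definition _ := GRing.isZmodClosed.Build T Npred Npred_closed.

Local Notation pi := \pi_(Quotient.quot Npred).

(* The quotient map [T -> T / N] and the zero map agree on pure tensors, hence everywhere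
   by the uniqueness part of the universal property. *)
Lemma tensor_span t : N t.
Proof.
have piN0 u : pi u = 0 <-> N u.
  split=> [pu0|Nu].
    have : u == 0 %[mod Quotient.quot Npred] by apply/eqP; rewrite pu0 pi_zeror.
    by rewrite -Quotient.idealrBE subr0 => /asboolP.
  have : u == 0 %[mod Quotient.quot Npred] by rewrite -Quotient.idealrBE subr0; exact/asboolP.
  by move/eqP; rewrite pi_zeror.
case: tensor => bDl [bDr [bZ [_ univ]]].
have phiDl x y s : pi (b (x + y) s) = pi (b x s) + pi (b y s) by rewrite bDl pi_addr.
have phiDr x s s' : pi (b x (s + s')) = pi (b x s) + pi (b x s') by rewrite bDr pi_addr.
have phiZ r x s : pi (b (r *: x) s) = pi (b x (f r * s)) by rewrite bZ.
have [g [_ [_ g_uniq]]] := univ _ _ phiDl phiDr phiZ.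
apply/piN0; have -> : pi t = g t by apply: g_uniq => // u v; exact: pi_addr.
by apply/esym/g_uniq => [u v|x s]; [rewrite addr0 | apply/esym/piN0].
Qed.

End TensorSpan.

Lemma base_change_localization_zero (R S : comPzRingType) (f : {rmorphism R -> S})
    (E : lmodType R) (T : lmodType S) (b : E -> S -> T) (Q : set S) :
  is_tensor_base_change f b -> is_prime Q ->
  localization_zero E (comap f Q) -> localization_zero T Q.
Proof.
move=> tensor [_ [Q1 QP]] Ep0 t; case: (tensor) => bDl [_ [bZ [bM _]]].
have b0 s : b 0 s = 0 by apply: (addrI (b 0 s)); rewrite -bDl !addr0.
apply: (@tensor_span _ _ _ _ _ _ (fun t => exists s, ~ Q s /\ s *: t = 0) tensor)
  => [|u v [s [Qs su]] [s' [Qs' sv]]|x s].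
- by exists 1; rewrite scaler0.
- exists (s * s'); split; first by move/QP => [].
  rewrite scalerBr -[(s * s') *: v]scalerA sv scaler0 subr0.
  by rewrite mulrC -scalerA su scaler0.
- have [r [pr rx]] := Ep0 x.
  by exists (f r); split=> //; rewrite -bM -bZ rx b0.
Qed.

Lemma functional_localization_nonzero (R S : comPzRingType) (f : {rmorphism R -> S})
    (E : lmodType R) (T : lmodType S) (b : E -> S -> T) (Q : set S) (K : fieldType)
    (h : {rmorphism S -> K}) (mu : E -> K) (y : E) :
  is_tensor_base_change f b -> (forall s, h s = 0 -> Q s) ->
  (forall z w, mu (z + w) = mu z + mu w) -> (forall r z, mu (r *: z) = h (f r) * mu z) ->
  mu y = 1 -> ~ localization_zero T Q.
Proof.
move=> [_ [_ [_ [bM univ]]]] hQ muD muZ mu1 TQ0.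
have phiDl z w s : mu (z + w) * h s = mu z * h s + mu w * h s by rewrite muD mulrDl.
have phiDr z s s' : mu z * h (s + s') = mu z * h s + mu z * h s' by rewrite rmorphD mulrDr.
have phiZ r z s : mu (r *: z) * h s = mu z * h (f r * s) by rewrite muZ rmorphM mulrCA mulrA.
have [G [GD [Gb _]]] := univ _ _ phiDl phiDr phiZ.
have G0 : G 0 = 0 by apply: (addrI (G 0)); rewrite -GD !addr0.
have [s [Qs sb0]] := TQ0 (b y 1); apply/Qs/hQ.
by rewrite -[h s]mul1r -mu1 -Gb -[s]mulr1 bM sb0 G0.
Qed.

Theorem proposition4p4 (R S : comPzRingType) (f : {rmorphism R -> S})
    (E : lmodType R) (T : lmodType S) (b : E -> S -> T) :
  @almost_fg R E -> going_down f -> @is_tensor_base_change R S f E T b ->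
  forall Q : S -> Prop, is_prime Q ->
    (@in_supp R E (comap f Q) <-> @in_supp S T Q).
Proof.
move=> E_afg f_gd tensor Q Q_prime; split=> [[p_prime Ep]|[_ TQ]]; last first.
  split; first exact: comap_prime.
  by move=> Ep0; apply: TQ; exact: base_change_localization_zero tensor Q_prime Ep0.
split=> //.
have [p' [y [p'_prime p'p y_free]]] := almost_fg_fiber_nonzero E_afg p_prime Ep.
have [Q' [Q'_prime [Q'Q Q'p']]] := f_gd _ _ _ p_prime p'_prime p'p Q_prime (fun=> iff_refl _).
have [K [h kerh]] := exists_residue_field Q'_prime.
pose hf : {rmorphism R -> K} := h \o f.
have kerhf : (fun r => hf r = 0) = p'.
  by apply/funext => r; apply/propext; split=> [/kerh/Q'p'|/Q'p'/kerh].
have [mu [muD muZ mu1]] : exists mu : E -> K, [/\ forall z w, mu (z + w) = mu z + mu w,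
    forall r z, mu (r *: z) = hf r * mu z & mu y = 1].
  by apply: exists_semilinear_functional; rewrite kerhf.
apply: (functional_localization_nonzero tensor _ muD muZ mu1).
by move=> s /kerh /Q'Q.
Qed.
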